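(* Let $a,b,c\in\mathbb R$ with $c+1>a+b$ and $c$ not a nonpositive integer, and for real $q>-1$ put \[ F(q):={}_3F_2\!\left({a,b,q\atop c,q+1};1\right). \] Then \[ \frac{(q+1-a)(q+1-b)}{q+1}F(q+1)-(q+1-c)F(q)=\frac{\Gamma(c)\,\Gamma(c+1-a-b)}{\Gamma(c-a)\,\Gamma(c-b)}, \] with the convention $1/\Gamma(-n)=0$ for nonnegative integers $n$.
   Context: ${}_3F_2\!\left({a_1,a_2,a_3\atop b_1,b_2};x\right)=\sum_{n\ge0}\frac{(a_1)_n(a_2)_n(a_3)_n}{(b_1)_n(b_2)_n}\frac{x^n}{n!}$ with $(x)_n=x(x+1)\cdots(x+n-1)$; at $x=1$ it converges when $b_1+b_2-a_1-a_2-a_3>0$. *)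

From Stdlib Require Import Reals Lra Arith Factorial ClassicalEpsilon.
Open Scope R_scope.

Fixpoint poch (x : R) (n : nat) : R :=
  match n with
  | O => 1
  | S m => poch x m * (x + INR m)
  end.

Definition hyp32_term (a1 a2 a3 b1 b2 : R) (n : nat) : R :=
  poch a1 n * poch a2 n * poch a3 n / (poch b1 n * poch b2 n * INR (fact n)).

(* Value at x = 1: the limit of the partial sums (chosen by classical
   description; it is the actual sum whenever the series converges). *)
Definition hyp32_at1 (a1 a2 a3 b1 b2 : R) : R :=
  epsilon (inhabits 0)
    (fun l => Un_cv (fun N => sum_f_R0 (hyp32_term a1 a2 a3 b1 b2) N) l).

(* Reciprocal Gamma function via the Euler–Gauss product:
   1/Gamma(x) = lim_n x(x+1)...(x+n) / (n! n^x).  This is entire and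
   vanishes exactly at x = 0,-1,-2,..., i.e. it encodes the convention
   1/Gamma(-n) = 0.  We use index n+1 to keep n^x well defined. *)
Definition rgamma_seq (x : R) (n : nat) : R :=
  prod_f_R0 (fun k => x + INR k) (S n)
  / (INR (fact (S n)) * Rpower (INR (S n)) x).

Definition rgamma (x : R) : R :=
  epsilon (inhabits 0) (fun l => Un_cv (rgamma_seq x) l).

(* Write [Delta c] for the left-hand side, as a function of [c].  Since
   [(q)_n / (q+1)_n = q / (q+n)], both 3F2 series are 2F1(a, b; c; 1) series with
   bounded weights, and they converge by Kummer's test because [c + 1 - a - b > 0].
   Summing termwise, [Delta] satisfies the contiguous relation
   [c (c + 1 - a - b) Delta c = (c - a) (c - b) Delta (c + 1)], so that
   [(c)_m (c+1-a-b)_m Delta c = (c-a)_m (c-b)_m Delta (c + m)].  For large [c]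
   the first term of the series is [c + O(1)] and the rest sums to [O(1)], hence
   [Delta (c + m) ~ m], and dividing the identity by the Euler-Gauss products
   [m! m^x / (x)_(m+1)] gives the Gamma quotient in the limit. *)
From Stdlib Require Import Reals Lra Lia Psatz ClassicalEpsilon Classical Factorial.
Open Scope R_scope.

Lemma Un_cv_const (l : R) : Un_cv (fun _ => l) l.
Proof.
  intros eps Heps. exists O. intros n _. unfold R_dist.
  rewrite Rminus_diag, Rabs_R0. exact Heps.
Qed.

Lemma Un_cv_eventually_ext (u v : nat -> R) (N : nat) (l : R) :
  (forall n, (N <= n)%nat -> u n = v n) -> Un_cv u l -> Un_cv v l.
Proof.
  intros Huv Hu eps Heps. destruct (Hu eps Heps) as [M HM]. exists (M + N)%nat.
  intros n Hn. rewrite <- Huv by lia. apply HM. lia.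
Qed.

Lemma Un_cv_of_sub_0 (u : nat -> R) (l : R) : Un_cv (fun n => u n - l) 0 -> Un_cv u l.
Proof.
  intros H eps Heps. destruct (H eps Heps) as [M HM]. exists M. intros n Hn.
  specialize (HM n Hn). unfold R_dist in *. rewrite Rminus_0_r in HM. exact HM.
Qed.

Lemma Un_cv_0_Rabs_S (u : nat -> R) : Un_cv u 0 -> Un_cv (fun n => Rabs (u (S n))) 0.
Proof.
  intros H eps Heps. destruct (H eps Heps) as [M HM]. exists M. intros n Hn.
  unfold R_dist in *. specialize (HM (S n) ltac:(lia)).
  rewrite Rminus_0_r in *. rewrite Rabs_Rabsolu. exact HM.
Qed.

Lemma Un_cv_0_dominated (u z : nat -> R) (C : R) (N : nat) :
  (forall n, (N <= n)%nat -> Rabs (u n) <= C * z n) -> Un_cv z 0 -> Un_cv u 0.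
Proof.
  intros Hdom Hz eps Heps.
  assert (HC : 0 < Rabs C + 1) by (pose proof (Rabs_pos C); lra).
  destruct (Hz (eps / (Rabs C + 1))) as [M HM]; [apply Rdiv_lt_0_compat; lra |].
  exists (M + N)%nat. intros n Hn. unfold R_dist in *. rewrite Rminus_0_r.
  specialize (HM n ltac:(lia)). rewrite Rminus_0_r in HM. specialize (Hdom n ltac:(lia)).
  assert (Hz_small : Rabs (z n) * (Rabs C + 1) < eps).
  { apply (Rmult_lt_reg_r (/ (Rabs C + 1))); [apply Rinv_0_lt_compat; lra |].
    rewrite Rmult_assoc, Rinv_r by lra. lra. }
  assert (HCz : C * z n <= Rabs C * Rabs (z n)) by (rewrite <- Rabs_mult; apply Rle_abs).
  pose proof (Rabs_pos (z n)). nra.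
Qed.

Lemma Un_cv_inv_INR_S : Un_cv (fun n => / INR (S n)) 0.
Proof.
  intros eps Heps. destruct (INR_archimed eps 1 Heps) as [N HN]. exists N. intros n Hn.
  unfold R_dist. rewrite Rminus_0_r.
  assert (HS : INR (S n) >= INR N + 1).
  { rewrite S_INR. apply Rle_ge, Rplus_le_compat_r, le_INR. lia. }
  pose proof (pos_INR N).
  rewrite Rabs_pos_eq by (left; apply Rinv_0_lt_compat; lra).
  apply (Rmult_lt_reg_r (INR (S n))); [lra |]. rewrite Rinv_l by lra. nra.
Qed.

Lemma Un_cv_limit_dist_le (u : nat -> R) (l r K : R) :
  Un_cv u l -> (forall n, Rabs (u n - r) <= K) -> Rabs (l - r) <= K.
Proof.
  intros Hu Hb. destruct (Rle_dec (Rabs (l - r)) K) as [|Hgt]; [assumption | exfalso].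
  destruct (Hu (Rabs (l - r) - K) ltac:(lra)) as [M HM].
  specialize (HM M (le_n _)). specialize (Hb M). unfold R_dist in HM.
  assert (Rabs (l - r) <= Rabs (u M - l) + Rabs (u M - r)).
  { replace (l - r) with (- (u M - l) + (u M - r)) by ring.
    eapply Rle_trans; [apply Rabs_triang |]. rewrite Rabs_Ropp. lra. }
  lra.
Qed.

Lemma Un_cv_telescoping_bound (u D : nat -> R) (N : nat) :
  (forall n, (N <= n)%nat -> Rabs (u (S n) - u n) <= D n - D (S n)) ->
  (forall n, (N <= n)%nat -> 0 <= D n) -> exists l, Un_cv u l.
Proof.
  intros Hstep HD.
  assert (Hspan : forall k n, (N <= n)%nat ->
    Rabs (u (n + k)%nat - u n) <= D n - D (n + k)%nat).
  { induction k as [|k IH]; intros n Hn.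
    - rewrite Nat.add_0_r, Rminus_diag, Rabs_R0. lra.
    - replace (n + S k)%nat with (S (n + k)) by lia.
      specialize (IH n Hn). specialize (Hstep (n + k)%nat ltac:(lia)).
      replace (u (S (n + k)) - u n)
        with ((u (S (n + k)) - u (n + k)%nat) + (u (n + k)%nat - u n)) by ring.
      eapply Rle_trans; [apply Rabs_triang | lra]. }
  destruct (decreasing_cv (fun n => D (n + N)%nat)) as [lD HlD].
  { intros n. simpl. specialize (Hstep (n + N)%nat ltac:(lia)).
    pose proof (Rabs_pos (u (S (n + N)) - u (n + N)%nat)). lra. }
  { exists 0. intros x [n ->]. unfold opp_seq. specialize (HD (n + N)%nat ltac:(lia)). lra. }
  assert (Hcauchy : Cauchy_crit u); [| destruct (R_complete u Hcauchy) as [l Hl]; now exists l].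
  intros eps Heps. destruct (HlD (eps / 2) ltac:(lra)) as [M HM].
  exists (M + N)%nat.
  assert (Hle : forall n m, (m >= M + N)%nat -> (m <= n)%nat -> Rabs (u n - u m) < eps).
  { intros n m Hm Hmn.
    pose proof (Hspan (n - m)%nat m ltac:(lia)) as Hk.
    replace (m + (n - m))%nat with n in Hk by lia.
    pose proof (HM (m - N)%nat ltac:(lia)) as H1. pose proof (HM (n - N)%nat ltac:(lia)) as H2.
    replace (m - N + N)%nat with m in H1 by lia. replace (n - N + N)%nat with n in H2 by lia.
    unfold R_dist in H1, H2. apply Rabs_def2 in H1. apply Rabs_def2 in H2. lra. }
  intros n m Hn Hm. unfold R_dist. destruct (Nat.le_gt_cases m n).
  - apply Hle; lia.
  - rewrite Rabs_minus_sym. apply Hle; lia.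
Qed.

(* A form of Olivier's theorem. *)
Lemma Un_cv_0_of_summable (v : nat -> R) (N : nat) (l : R) :
  (forall n, (N <= n)%nat -> 0 <= v n) ->
  (forall n, (N <= n)%nat -> INR (S n) * v (S n) <= INR n * v n) ->
  Un_cv (sum_f_R0 v) l -> Un_cv (fun n => INR n * v n) 0.
Proof.
  intros Hpos Hdec Hsum.
  assert (Hv_dec : forall n, (N <= n)%nat -> v (S n) <= v n).
  { intros n Hn. specialize (Hdec n Hn). rewrite S_INR in Hdec.
    pose proof (Hpos n Hn). pose proof (Hpos (S n) ltac:(lia)). pose proof (pos_INR n). nra. }
  assert (Hblock : forall m k, (N <= m)%nat ->
    INR k * v (m + k)%nat <= sum_f_R0 v (m + k) - sum_f_R0 v m).
  { intros m k Hm. induction k as [|k IH].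
    - rewrite Nat.add_0_r. simpl. lra.
    - replace (m + S k)%nat with (S (m + k)) by lia. simpl sum_f_R0. rewrite S_INR.
      pose proof (Hv_dec (m + k)%nat ltac:(lia)). pose proof (Hpos (S (m + k)) ltac:(lia)).
      pose proof (pos_INR k). nra. }
  intros eps Heps. destruct (Hsum (eps / 4) ltac:(lra)) as [M HM].
  exists (2 * (M + N))%nat. intros n Hn. unfold R_dist. rewrite Rminus_0_r.
  set (m := (M + N)%nat).
  pose proof (Hblock m (n - m)%nat ltac:(lia)) as Hb.
  replace (m + (n - m))%nat with n in Hb by lia.
  pose proof (HM n ltac:(lia)) as H1. pose proof (HM m ltac:(lia)) as H2.
  unfold R_dist in H1, H2. apply Rabs_def2 in H1. apply Rabs_def2 in H2.
  assert (Hnm : INR n <= 2 * INR (n - m)).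
  { assert (HH : INR n <= INR (2 * (n - m))) by (apply le_INR; lia).
    rewrite mult_INR in HH. simpl (INR 2) in HH. lra. }
  pose proof (Hpos n ltac:(lia)). pose proof (pos_INR n).
  assert (INR n * v n <= 2 * INR (n - m) * v n) by (apply Rmult_le_compat_r; lra).
  rewrite Rabs_pos_eq by nra. lra.
Qed.

Section Kummer.

Variables (v : nat -> R) (N : nat) (d : R).
Hypothesis d_pos : 0 < d.
Hypothesis v_nonneg : forall n, (N <= n)%nat -> 0 <= v n.
Hypothesis v_kummer : forall n, (N <= n)%nat -> (INR n + 1 + d) * v (S n) <= INR n * v n.

Lemma kummer_series_cv (u : nat -> R) (K : R) : 0 <= K ->
  (forall n, (N <= n)%nat -> Rabs (u (S n)) <= K * v (S n)) ->
  exists l, Un_cv (sum_f_R0 u) l.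
Proof.
  intros HK Hu.
  apply (Un_cv_telescoping_bound _ (fun n => K * (INR n * v n) / d) N).
  - intros n Hn. simpl sum_f_R0.
    replace (sum_f_R0 u n + u (S n) - sum_f_R0 u n) with (u (S n)) by ring.
    eapply Rle_trans; [apply Hu, Hn |]. rewrite S_INR.
    apply (Rmult_le_reg_r d); [exact d_pos |].
    replace ((K * (INR n * v n) / d - K * ((INR n + 1) * v (S n)) / d) * d)
      with (K * (INR n * v n - (INR n + 1) * v (S n))) by (field; lra).
    pose proof (v_kummer n Hn). nra.
  - intros n Hn. apply Rle_mult_inv_pos; [| exact d_pos].
    apply Rmult_le_pos; [exact HK | apply Rmult_le_pos; [apply pos_INR | apply v_nonneg, Hn]].
Qed.

Lemma kummer_null : Un_cv (fun n => INR n * v n) 0.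
Proof.
  destruct (kummer_series_cv v 1 ltac:(lra)) as [l Hl].
  { intros n Hn. rewrite Rmult_1_l, Rabs_pos_eq by (apply v_nonneg; lia). lra. }
  apply (Un_cv_0_of_summable v N l v_nonneg); [| exact Hl].
  intros n Hn. rewrite S_INR.
  pose proof (v_kummer n Hn). pose proof (v_nonneg (S n) ltac:(lia)). nra.
Qed.

End Kummer.

Lemma ln_1p_le (y : R) : -1 < y -> ln (1 + y) <= y.
Proof.
  intros Hy. destruct (Rle_lt_or_eq_dec _ _ (exp_ineq1_le y)) as [Hlt|Heq].
  - left. rewrite <- (ln_exp y) at 2. apply ln_increasing; lra.
  - rewrite Heq, ln_exp. lra.
Qed.

Lemma ln_1p_ge (y : R) : -1 < y -> y / (1 + y) <= ln (1 + y).
Proof.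
  intros Hy. assert (Hz : -1 < - y / (1 + y)).
  { apply (Rmult_lt_reg_r (1 + y)); [lra |]. field_simplify; lra. }
  pose proof (ln_1p_le _ Hz) as H.
  replace (1 + - y / (1 + y)) with (/ (1 + y)) in H by (field; lra).
  rewrite ln_Rinv in H by lra.
  replace (- y / (1 + y)) with (- (y / (1 + y))) in H by (field; lra). lra.
Qed.

(* With [P = Q + 1]: [ln (1 + x/P)] and [x ln (1 + 1/Q)] both equal [x/P] up to
   [O(1/(Q P))], which makes the logarithms of the Euler products telescope. *)
Lemma ln_ratio_estimate (x P Q : R) : Q > 0 -> P = Q + 1 -> P + x >= P / 2 ->
  Rabs (ln (1 + x / P) - x * ln (1 + 1 / Q)) <= (2 * x * x + Rabs x) / (Q * P).
Proof.
  intros HQ HP Hx.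
  assert (HPp : P > 0) by lra.
  assert (Hy1 : -1 < x / P) by (apply (Rmult_lt_reg_r P); [lra | field_simplify; lra]).
  assert (Hy2 : -1 < 1 / Q) by (assert (0 < 1 / Q) by (apply Rdiv_lt_0_compat; lra); lra).
  pose proof (ln_1p_le _ Hy1) as A1. pose proof (ln_1p_ge _ Hy1) as A2.
  pose proof (ln_1p_le _ Hy2) as B1. pose proof (ln_1p_ge _ Hy2) as B2.
  set (l1 := ln (1 + x / P)) in *. set (L2 := ln (1 + 1 / Q)) in *.
  replace (x / P / (1 + x / P)) with (x / (P + x)) in A2 by (field; lra).
  replace (1 / Q / (1 + 1 / Q)) with (1 / P) in B2 by (subst P; field; lra).
  assert (SA : Rabs (l1 - x / P) <= 2 * x * x / (Q * P)).
  { rewrite Rabs_left1 by lra.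
    assert (x / P - x / (P + x) = x * x / (P * (P + x))) by (field; lra).
    assert (x * x / (P * (P + x)) <= 2 * x * x / (Q * P)).
    { replace (2 * x * x / (Q * P)) with (x * x * / (Q * P / 2)) by (field; lra).
      unfold Rdiv. apply Rmult_le_compat_l; [nra |].
      apply Rinv_le_contravar; nra. }
    lra. }
  assert (SB : Rabs (x / P - x * L2) <= Rabs x / (Q * P)).
  { replace (x / P - x * L2) with (x * (1 / P - L2)) by (field; lra).
    rewrite Rabs_mult. unfold Rdiv.
    apply Rmult_le_compat_l; [apply Rabs_pos |].
    rewrite Rabs_left1 by lra.
    assert (1 / Q - 1 / P = / (Q * P)) by (subst P; field; lra). lra. }
  replace (l1 - x * L2) with ((l1 - x / P) + (x / P - x * L2)) by ring.
  eapply Rle_trans; [apply Rabs_triang |].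
  replace ((2 * x * x + Rabs x) / (Q * P))
    with (2 * x * x / (Q * P) + Rabs x / (Q * P)) by (field; lra).
  lra.
Qed.

Definition not_nonpos_int (x : R) : Prop := forall k : nat, x <> - INR k.

Lemma not_nonpos_int_pos (x : R) : 0 < x -> not_nonpos_int x.
Proof. intros H k E. pose proof (pos_INR k). lra. Qed.

Lemma not_nonpos_int_plus_INR (x : R) (m : nat) :
  not_nonpos_int x -> not_nonpos_int (x + INR m).
Proof. intros hx k E. apply (hx (k + m)%nat). rewrite plus_INR. lra. Qed.

Lemma not_nonpos_int_plus_1 (x : R) : not_nonpos_int x -> not_nonpos_int (x + 1).
Proof. intros hx. exact (not_nonpos_int_plus_INR x 1 hx). Qed.

Lemma poch_S (x : R) (n : nat) : poch x (S n) = poch x n * (x + INR n).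
Proof. reflexivity. Qed.

Lemma poch_S_l (x : R) (n : nat) : poch x (S n) = x * poch (x + 1) n.
Proof.
  induction n as [|n IH].
  - simpl. ring.
  - rewrite poch_S, IH, poch_S, S_INR. ring.
Qed.

Lemma prod_f_R0_poch (x : R) (n : nat) :
  prod_f_R0 (fun k => x + INR k) n = poch x (S n).
Proof.
  induction n as [|n IH]; [simpl; ring |].
  simpl prod_f_R0. rewrite IH. reflexivity.
Qed.

Lemma poch_neq0 (x : R) (n : nat) : not_nonpos_int x -> poch x n <> 0.
Proof.
  intros hx. induction n as [|n IH]; simpl; [lra |].
  apply Rmult_integral_contrapositive. split; [exact IH |].
  intro E. apply (hx n). lra.
Qed.

Lemma poch_pos (x : R) (n : nat) : 0 < x -> 0 < poch x n.
Proof.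
  intros H. induction n as [|n IH]; simpl; [lra |].
  apply Rmult_lt_0_compat; [exact IH |]. pose proof (pos_INR n). lra.
Qed.

Lemma poch_nonneg (x : R) (n : nat) : 0 <= x -> 0 <= poch x n.
Proof.
  intros H. induction n as [|n IH]; simpl; [lra |].
  apply Rmult_le_pos; [exact IH |]. pose proof (pos_INR n). lra.
Qed.

Lemma poch_eq0 (k m : nat) : (k < m)%nat -> poch (- INR k) m = 0.
Proof.
  induction m as [|m IH]; intros Hm; [lia |].
  rewrite poch_S. destruct (Nat.eq_dec k m) as [->|Hne].
  - ring.
  - rewrite IH by lia. ring.
Qed.

Lemma Rabs_poch_le (x : R) (n : nat) : Rabs (poch x n) <= poch (Rabs x) n.
Proof.
  induction n as [|n IH]; simpl; [rewrite Rabs_R1; lra |].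
  rewrite Rabs_mult. apply Rmult_le_compat; try apply Rabs_pos; [exact IH |].
  eapply Rle_trans; [apply Rabs_triang |].
  rewrite (Rabs_pos_eq (INR n)) by apply pos_INR. lra.
Qed.

Lemma Un_cv_nonzero_of_ln_Rabs (s : nat -> R) (N : nat) :
  (forall n, s n <> 0) -> (forall n, (N <= n)%nat -> 0 < s (S n) * s n) ->
  (exists lg, Un_cv (fun n => ln (Rabs (s n))) lg) -> exists l, Un_cv s l /\ l <> 0.
Proof.
  intros Hnz Hsign [lg Hlg].
  assert (Hsame : forall n, (N <= n)%nat -> 0 < s n * s N).
  { intros n Hn. induction Hn as [|n Hn IH].
    - pose proof (Hnz N). nra.
    - specialize (Hsign n Hn). assert (0 < s n * s n) by (pose proof (Hnz n); nra). nra. }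
  set (sg := s N / Rabs (s N)).
  assert (Hsg : sg <> 0).
  { apply Rmult_integral_contrapositive. split; [apply Hnz |].
    apply Rinv_neq_0_compat, Rabs_no_R0, Hnz. }
  exists (sg * exp lg). split; [| apply Rmult_integral_contrapositive; split; [exact Hsg | apply exp_neq_0]].
  apply (Un_cv_eventually_ext (fun n => sg * exp (ln (Rabs (s n)))) _ N).
  - intros n Hn. rewrite exp_ln by (apply Rabs_pos_lt, Hnz).
    specialize (Hsame n Hn). pose proof (Hnz N). unfold sg.
    destruct (Rlt_dec 0 (s N)).
    + rewrite !Rabs_pos_eq by nra. field. lra.
    + rewrite !Rabs_left by nra. field. lra.
  - apply CV_mult; [apply Un_cv_const |].
    apply continuity_seq; [apply derivable_continuous_pt, derivable_exp | exact Hlg].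
Qed.

Lemma rgamma_of_Un_cv (x l : R) : Un_cv (rgamma_seq x) l -> rgamma x = l.
Proof.
  intros H. unfold rgamma.
  eapply UL_sequence; [| exact H].
  exact (epsilon_spec (inhabits 0) (fun l => Un_cv (rgamma_seq x) l) (ex_intro _ l H)).
Qed.

Definition rgamma_ratio (x : R) (n : nat) : R :=
  (x + INR (S (S n))) / INR (S (S n)) * (Rpower (INR (S n)) x / Rpower (INR (S (S n))) x).

Lemma rgamma_seq_S (x : R) (n : nat) :
  rgamma_seq x (S n) = rgamma_seq x n * rgamma_ratio x n.
Proof.
  unfold rgamma_seq, rgamma_ratio. rewrite !prod_f_R0_poch, (poch_S x (S (S n))).
  rewrite (fact_simpl (S n)), mult_INR.
  pose proof (INR_fact_lt_0 (S n)).
  assert (0 < Rpower (INR (S n)) x) by apply exp_pos.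
  assert (0 < Rpower (INR (S (S n))) x) by apply exp_pos.
  assert (INR (S (S n)) > 0) by (apply lt_0_INR; lia).
  field. repeat split; lra.
Qed.

Lemma rgamma_seq_eventually_0 (k n : nat) : (k <= n)%nat -> rgamma_seq (- INR k) n = 0.
Proof.
  intros Hkn. unfold rgamma_seq. rewrite prod_f_R0_poch, poch_eq0 by lia.
  unfold Rdiv. ring.
Qed.

Lemma rgamma_seq_neq0 (x : R) (n : nat) : not_nonpos_int x -> rgamma_seq x n <> 0.
Proof.
  intros hx. unfold rgamma_seq. rewrite prod_f_R0_poch.
  apply Rmult_integral_contrapositive; split; [apply poch_neq0, hx |].
  apply Rinv_neq_0_compat, Rmult_integral_contrapositive; split.
  - apply INR_fact_neq_0.
  - apply Rgt_not_eq, exp_pos.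
Qed.

Lemma rgamma_ratio_pos (x : R) (n : nat) : 2 * Rabs x <= INR n -> 0 < rgamma_ratio x n.
Proof.
  intros Hn. unfold rgamma_ratio. rewrite !S_INR.
  pose proof (exp_pos (x * ln (INR n + 1))). pose proof (exp_pos (x * ln (INR n + 1 + 1))).
  pose proof (pos_INR n). pose proof (Rle_abs (- x)). rewrite Rabs_Ropp in *.
  apply Rmult_lt_0_compat; apply Rdiv_lt_0_compat; unfold Rpower; lra.
Qed.

Lemma ln_rgamma_ratio (x : R) (n : nat) : 2 * Rabs x <= INR n ->
  ln (rgamma_ratio x n) = ln (1 + x / INR (S (S n))) - x * ln (1 + 1 / INR (S n)).
Proof.
  intros Hn. unfold rgamma_ratio.
  assert (HP : INR (S (S n)) > 0) by (apply lt_0_INR; lia).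
  assert (HQ : INR (S n) > 0) by (apply lt_0_INR; lia).
  assert (HxP : 0 < x + INR (S (S n))).
  { rewrite !S_INR. pose proof (pos_INR n). pose proof (Rle_abs (- x)).
    rewrite Rabs_Ropp in *. lra. }
  pose proof (exp_pos (x * ln (INR (S n)))). pose proof (exp_pos (x * ln (INR (S (S n))))).
  unfold Rpower in *.
  rewrite ln_mult by (apply Rdiv_lt_0_compat; lra).
  unfold Rdiv at 2. rewrite ln_mult, ln_Rinv, !ln_exp by (try apply Rinv_0_lt_compat; lra).
  replace ((x + INR (S (S n))) / INR (S (S n))) with (1 + x / INR (S (S n))) by (field; lra).
  replace (1 + 1 / INR (S n)) with (INR (S (S n)) * / INR (S n))
    by (rewrite (S_INR (S n)); field; lra).
  rewrite ln_mult, ln_Rinv by (try apply Rinv_0_lt_compat; lra). ring.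
Qed.

Lemma Rabs_ln_rgamma_ratio_le (x : R) (n : nat) : 2 * Rabs x <= INR n ->
  Rabs (ln (rgamma_ratio x n)) <=
  (2 * x * x + Rabs x) / (INR n + 1) - (2 * x * x + Rabs x) / (INR (S n) + 1).
Proof.
  intros Hn. rewrite ln_rgamma_ratio by exact Hn.
  pose proof (pos_INR n).
  eapply Rle_trans; [apply ln_ratio_estimate |].
  - apply lt_0_INR. lia.
  - apply S_INR.
  - rewrite !S_INR. pose proof (Rle_abs (- x)). rewrite Rabs_Ropp in *. lra.
  - rewrite !S_INR. right. field. lra.
Qed.

Lemma rgamma_seq_cv (x : R) :
  exists l, Un_cv (rgamma_seq x) l /\ (not_nonpos_int x -> l <> 0).
Proof.
  destruct (classic (exists k, x = - INR k)) as [[k ->]|Hpole].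
  - exists 0. split.
    + apply (Un_cv_eventually_ext (fun _ => 0) _ k); [| apply Un_cv_const].
      intros n Hn. symmetry. apply rgamma_seq_eventually_0, Hn.
    + intros H. exfalso. exact (H k eq_refl).
  - assert (hx : not_nonpos_int x) by (intros k E; apply Hpole; eauto).
    destruct (INR_archimed 1 (2 * Rabs x) ltac:(lra)) as [N HN]. rewrite Rmult_1_r in HN.
    assert (HNn : forall n, (N <= n)%nat -> 2 * Rabs x <= INR n).
    { intros n Hn. apply le_INR in Hn. lra. }
    destruct (Un_cv_nonzero_of_ln_Rabs (rgamma_seq x) N) as [l [Hl Hl0]].
    + intros n. apply rgamma_seq_neq0, hx.
    + intros n Hn. rewrite rgamma_seq_S.
      pose proof (rgamma_ratio_pos x n (HNn n Hn)).
      assert (0 < rgamma_seq x n * rgamma_seq x n).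
      { pose proof (rgamma_seq_neq0 x n hx). nra. }
      nra.
    + set (K := 2 * x * x + Rabs x).
      apply (Un_cv_telescoping_bound _ (fun n => K / (INR n + 1)) N).
      * intros n Hn. rewrite rgamma_seq_S, Rabs_mult.
        rewrite (Rabs_pos_eq (rgamma_ratio x n)) by (left; apply rgamma_ratio_pos, HNn, Hn).
        rewrite ln_mult
          by (try apply Rabs_pos_lt, rgamma_seq_neq0, hx; apply rgamma_ratio_pos, HNn, Hn).
        replace (ln (Rabs (rgamma_seq x n)) + ln (rgamma_ratio x n) - ln (Rabs (rgamma_seq x n)))
          with (ln (rgamma_ratio x n)) by ring.
        apply Rabs_ln_rgamma_ratio_le, HNn, Hn.
      * intros n _. apply Rle_mult_inv_pos.
        -- unfold K. pose proof (Rabs_pos x). nra.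
        -- pose proof (pos_INR n). lra.
    + exists l. split; [exact Hl | intros _; exact Hl0].
Qed.

Definition hyp21_term (a b c : R) (n : nat) : R :=
  poch a n * poch b n / (poch c n * INR (fact n)).

Definition poch_ratio (p : R) (n : nat) : R := poch p n / poch (p + 1) n.

Lemma hyp21_term_0 (a b c : R) : hyp21_term a b c 0 = 1.
Proof. unfold hyp21_term. simpl. field. Qed.

Lemma hyp21_term_S (a b c : R) (n : nat) : not_nonpos_int c ->
  hyp21_term a b c (S n) =
  hyp21_term a b c n * ((a + INR n) * (b + INR n) / ((c + INR n) * INR (S n))).
Proof.
  intros hc. unfold hyp21_term. rewrite !poch_S, fact_simpl, mult_INR.
  pose proof (poch_neq0 c n hc). pose proof (INR_fact_lt_0 n).
  assert (c + INR n <> 0) by (intro E; apply (hc n); lra).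
  assert (INR (S n) > 0) by (apply lt_0_INR; lia).
  field. repeat split; lra.
Qed.

Lemma hyp21_term_plus_1 (a b c : R) (n : nat) : not_nonpos_int c ->
  hyp21_term a b (c + 1) n = hyp21_term a b c n * (c / (c + INR n)).
Proof.
  intros hc. unfold hyp21_term.
  pose proof (poch_S_l c n) as Hs. rewrite poch_S in Hs.
  pose proof (poch_neq0 c n hc). pose proof (INR_fact_lt_0 n).
  assert (c + INR n <> 0) by (intro E; apply (hc n); lra).
  assert (c <> 0) by (intro E; apply (hc O); simpl; lra).
  assert (Hp : poch (c + 1) n = poch c n * (c + INR n) / c) by (rewrite Hs; field; assumption).
  rewrite Hp. field. repeat split; lra.
Qed.

Lemma poch_ratio_0 (p : R) : poch_ratio p 0 = 1.
Proof. unfold poch_ratio. simpl. field. Qed.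

Lemma poch_ratio_S (p : R) (n : nat) : p + 1 > 0 -> poch_ratio p (S n) = p / (p + INR (S n)).
Proof.
  intros Hp. unfold poch_ratio. rewrite poch_S_l, (poch_S (p + 1) n), S_INR.
  pose proof (poch_pos (p + 1) n Hp). pose proof (pos_INR n).
  field. split; lra.
Qed.

Lemma hyp32_term_eq (a b c p : R) (n : nat) : p + 1 > 0 -> not_nonpos_int c ->
  hyp32_term a b p c (p + 1) n = hyp21_term a b c n * poch_ratio p n.
Proof.
  intros Hp hc. unfold hyp32_term, hyp21_term, poch_ratio.
  pose proof (poch_neq0 c n hc). pose proof (INR_fact_lt_0 n). pose proof (poch_pos (p + 1) n Hp).
  field. repeat split; lra.
Qed.

Lemma hyp32_at1_of_Un_cv (a b c p l : R) : p + 1 > 0 -> not_nonpos_int c ->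
  Un_cv (sum_f_R0 (fun n => hyp21_term a b c n * poch_ratio p n)) l ->
  hyp32_at1 a b p c (p + 1) = l.
Proof.
  intros Hp hc H.
  assert (H' : Un_cv (fun N => sum_f_R0 (hyp32_term a b p c (p + 1)) N) l).
  { apply (Un_cv_eventually_ext (sum_f_R0 (fun n => hyp21_term a b c n * poch_ratio p n)) _ 0);
      [| exact H].
    intros N _. apply sum_eq. intros i _. symmetry. apply hyp32_term_eq; assumption. }
  unfold hyp32_at1. eapply UL_sequence; [| exact H'].
  exact (epsilon_spec (inhabits 0) (fun l => Un_cv (fun N => sum_f_R0 (hyp32_term a b p c (p + 1)) N) l)
     (ex_intro _ l H')).
Qed.

Lemma eventually_pos_plus_INR (x : R) : exists N, forall n, (N <= n)%nat -> 0 < x + INR n.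
Proof.
  destruct (INR_archimed 1 (Rabs x + 1) ltac:(lra)) as [N HN]. rewrite Rmult_1_r in HN.
  exists N. intros n Hn. apply le_INR in Hn.
  pose proof (Rle_abs (- x)). rewrite Rabs_Ropp in *. lra.
Qed.

Lemma cubic_eventually_nonneg (a3 a2 a1 a0 : R) : 0 < a3 ->
  exists N, forall n, (N <= n)%nat -> 0 <= a3 * INR n ^ 3 + a2 * INR n ^ 2 + a1 * INR n + a0.
Proof.
  intros Ha3. set (M := Rabs a2 + Rabs a1 + Rabs a0).
  assert (HM : 0 <= M) by (unfold M; pose proof (Rabs_pos a2); pose proof (Rabs_pos a1);
                                       pose proof (Rabs_pos a0); lra).
  destruct (INR_archimed 1 (1 + M / a3) ltac:(lra)) as [N HN]. rewrite Rmult_1_r in HN.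
  exists N. intros n Hn. apply le_INR in Hn. set (x := INR n) in *.
  assert (HMa3 : 0 <= M / a3) by (apply Rle_mult_inv_pos; lra).
  assert (Hx1 : 1 <= x) by lra.
  assert (Hax : M <= a3 * x).
  { replace M with (a3 * (M / a3)) by (field; lra). apply Rmult_le_compat_l; lra. }
  assert (Hxx : x <= x ^ 2) by nra.
  pose proof (Rle_abs (- a2)). pose proof (Rle_abs (- a1)). pose proof (Rle_abs (- a0)).
  rewrite !Rabs_Ropp in *.
  assert (a2 * x ^ 2 >= - Rabs a2 * x ^ 2) by nra.
  assert (a1 * x >= - Rabs a1 * x) by nra.
  assert (Rabs a1 * x <= Rabs a1 * x ^ 2) by (apply Rmult_le_compat_l; [apply Rabs_pos | lra]).
  assert (Rabs a0 * 1 <= Rabs a0 * x ^ 2) by (apply Rmult_le_compat_l; [apply Rabs_pos | nra]).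
  assert (a3 * x ^ 3 >= M * x ^ 2) by (replace (a3 * x ^ 3) with ((a3 * x) * x ^ 2) by ring; nra).
  unfold M in *. lra.
Qed.

(* The gap [c + 1 - a - b > 0] leaves the margin [d = (c + 1 - a - b) / 2]
   in Kummer's test. *)
Lemma hyp21_kummer (a b c p : R) : c + 1 > a + b -> not_nonpos_int c ->
  exists N, forall n, (N <= n)%nat -> 0 < p + INR n /\
    (INR n + 1 + (c + 1 - a - b) / 2) * (Rabs (hyp21_term a b c (S n)) / (p + INR (S n)))
    <= INR n * (Rabs (hyp21_term a b c n) / (p + INR n)).
Proof.
  intros habc hc. set (d := (c + 1 - a - b) / 2).
  set (s := a + b). set (r := a * b).
  destruct (cubic_eventually_nonneg d
    (c * (p + 1) + c + p + 1 - r - s * p - (1 + d) * (s + p))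
    (c * (p + 1) - r * p - (1 + d) * (r + s * p))
    (- (1 + d) * r * p) ltac:(unfold d; lra)) as [N0 HN0].
  destruct (eventually_pos_plus_INR a) as [Na HNa].
  destruct (eventually_pos_plus_INR b) as [Nb HNb].
  destruct (eventually_pos_plus_INR c) as [Nc HNc].
  destruct (eventually_pos_plus_INR p) as [Np HNp].
  exists (N0 + Na + Nb + Nc + Np)%nat. intros n Hn.
  specialize (HN0 n ltac:(lia)). specialize (HNa n ltac:(lia)). specialize (HNb n ltac:(lia)).
  specialize (HNc n ltac:(lia)). specialize (HNp n ltac:(lia)).
  split; [exact HNp |].
  rewrite hyp21_term_S, Rabs_mult, S_INR by exact hc.
  set (x := INR n) in *. pose proof (pos_INR n) as Hx0. fold x in Hx0.
  assert (Hcubic : (x + 1 + d) * (a + x) * (b + x) * (p + x) <= x * (x + 1) * (c + x) * (p + x + 1)).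
  { assert (Hid : x * (x + 1) * (c + x) * (p + x + 1) - (x + 1 + d) * (a + x) * (b + x) * (p + x) =
      d * x ^ 3 + (c * (p + 1) + c + p + 1 - r - s * p - (1 + d) * (s + p)) * x ^ 2
      + (c * (p + 1) - r * p - (1 + d) * (r + s * p)) * x + - (1 + d) * r * p).
    { unfold s, r, d. field. }
    lra. }
  rewrite (Rabs_pos_eq ((a + x) * (b + x) / ((c + x) * (x + 1))))
    by (left; apply Rdiv_lt_0_compat; apply Rmult_lt_0_compat; lra).
  set (T := Rabs (hyp21_term a b c n)). assert (HT : 0 <= T) by apply Rabs_pos.
  replace ((x + 1 + d) * (T * ((a + x) * (b + x) / ((c + x) * (x + 1))) / (p + (x + 1))))
    with (T * ((x + 1 + d) * (a + x) * (b + x) * (p + x)) * / ((c + x) * (x + 1) * (p + x + 1) * (p + x)))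
    by (field; repeat split; lra).
  replace (x * (T / (p + x)))
    with (T * (x * (x + 1) * (c + x) * (p + x + 1)) * / ((c + x) * (x + 1) * (p + x + 1) * (p + x)))
    by (field; repeat split; lra).
  apply Rmult_le_compat_r; [left; apply Rinv_0_lt_compat; repeat apply Rmult_lt_0_compat; lra |].
  apply Rmult_le_compat_l; assumption.
Qed.

Lemma hyp21_series_cv (a b c p : R) : c + 1 > a + b -> not_nonpos_int c -> p > -1 ->
  exists l, Un_cv (sum_f_R0 (fun n => hyp21_term a b c n * poch_ratio p n)) l.
Proof.
  intros habc hc hp. destruct (hyp21_kummer a b c p habc hc) as [N HN].
  apply (kummer_series_cv (fun n => Rabs (hyp21_term a b c n) / (p + INR n)) N
           ((c + 1 - a - b) / 2) ltac:(lra)) with (K := Rabs p).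
  - intros n Hn. apply Rle_mult_inv_pos; [apply Rabs_pos | apply (HN n Hn)].
  - intros n Hn. apply (HN n Hn).
  - apply Rabs_pos.
  - intros n _. rewrite poch_ratio_S, Rabs_mult by lra. unfold Rdiv.
    rewrite Rabs_mult, Rabs_inv, (Rabs_pos_eq (p + INR (S n)))
      by (rewrite S_INR; pose proof (pos_INR n); lra).
    right. ring.
Qed.

Lemma hyp21_term_cv_0 (a b c : R) : c + 1 > a + b -> not_nonpos_int c ->
  Un_cv (hyp21_term a b c) 0.
Proof.
  intros habc hc. destruct (hyp21_kummer a b c 0 habc hc) as [N HN].
  apply (Un_cv_0_dominated _ (fun n => INR n * (Rabs (hyp21_term a b c n) / (0 + INR n))) 1 N).
  - intros n Hn. destruct (HN n Hn) as [Hn0 _]. right. field. lra.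
  - apply (kummer_null _ N ((c + 1 - a - b) / 2) ltac:(lra)).
    + intros n Hn. apply Rle_mult_inv_pos; [apply Rabs_pos | apply (HN n Hn)].
    + intros n Hn. apply (HN n Hn).
Qed.

Lemma hyp21_term_nonneg (A B c : R) (n : nat) : 0 <= A -> 0 <= B -> c > 0 ->
  0 <= hyp21_term A B c n.
Proof.
  intros HA HB Hc. unfold hyp21_term. pose proof (poch_pos c n Hc). pose proof (INR_fact_lt_0 n).
  apply Rle_mult_inv_pos; [apply Rmult_le_pos; apply poch_nonneg; assumption | nra].
Qed.

Lemma Rabs_hyp21_term_le (a b c : R) (n : nat) : c > 0 ->
  Rabs (hyp21_term a b c n) <= hyp21_term (Rabs a) (Rabs b) c n.
Proof.
  intros Hc. unfold hyp21_term. pose proof (poch_pos c n Hc). pose proof (INR_fact_lt_0 n).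
  unfold Rdiv. rewrite !Rabs_mult, Rabs_inv.
  rewrite (Rabs_pos_eq (poch c n * INR (fact n))) by (apply Rmult_le_pos; lra).
  apply Rmult_le_compat_r; [left; apply Rinv_0_lt_compat; nra |].
  apply Rmult_le_compat; try apply Rabs_pos; apply Rabs_poch_le.
Qed.

(* For [c] large compared with [A] and [B] the terms [n t_n] decrease from [n = 1]
   on, so the tail after [t_0 = 1] is at most twice [t_1 = A B / c]. *)
Lemma hyp21_partial_sum_le (A B c : R) (N : nat) : 0 <= A -> 0 <= B ->
  c >= 1 + 3 * A + 3 * B + 3 * A * B ->
  sum_f_R0 (hyp21_term A B c) N <= 1 + 2 * (A * B / c).
Proof.
  intros HA HB Hc.
  assert (Hc0 : c > 0) by nra.
  pose proof (not_nonpos_int_pos c Hc0) as hc.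
  assert (Ht1 : hyp21_term A B c 1 = A * B / c).
  { rewrite hyp21_term_S, hyp21_term_0 by exact hc. simpl INR. field. lra. }
  assert (Hdec : forall n, (1 <= n)%nat ->
    (INR n + 2) * hyp21_term A B c (S n) <= INR n * hyp21_term A B c n).
  { intros n Hn. rewrite hyp21_term_S by exact hc. apply le_INR in Hn. simpl INR in Hn.
    rewrite S_INR. set (x := INR n) in *. pose proof (hyp21_term_nonneg A B c n HA HB Hc0).
    set (T := hyp21_term A B c n) in *.
    replace ((x + 2) * (T * ((A + x) * (B + x) / ((c + x) * (x + 1)))))
      with (T * ((x + 2) * (A + x) * (B + x) / ((c + x) * (x + 1)))) by (field; lra).
    rewrite (Rmult_comm x T). apply Rmult_le_compat_l; [assumption |].
    apply (Rmult_le_reg_r ((c + x) * (x + 1))); [nra |].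
    unfold Rdiv. rewrite Rmult_assoc, Rinv_l by nra.
    assert (H1 : (c - 1 - A - B) * x ^ 2 >= 2 * A * B).
    { assert ((c - 1 - A - B) * x ^ 2 >= (c - 1 - A - B) * 1)
        by (apply Rle_ge, Rmult_le_compat_l; nra). nra. }
    assert (H2 : (c - 2 * A - 2 * B - A * B) * x >= 0) by (apply Rle_ge, Rmult_le_pos; nra).
    nra. }
  assert (Htail : forall M, sum_f_R0 (hyp21_term A B c) M - 1 + INR M * hyp21_term A B c M
                            <= 2 * hyp21_term A B c 1).
  { pose proof (hyp21_term_nonneg A B c 1 HA HB Hc0).
    induction M as [|M IH]; simpl sum_f_R0; rewrite ?hyp21_term_0.
    - simpl. lra.
    - rewrite S_INR. destruct M as [|M].
      + simpl. rewrite hyp21_term_0. lra.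
      + pose proof (Hdec (S M) ltac:(lia)). rewrite S_INR in *. nra. }
  specialize (Htail N). pose proof (hyp21_term_nonneg A B c N HA HB Hc0). pose proof (pos_INR N).
  rewrite Ht1 in Htail. nra.
Qed.

Section Contiguity.

Variables a b q : R.
Hypothesis hq : q > -1.

Definition contig_alpha : R := (q + 1 - a) * (q + 1 - b) / (q + 1).

Definition Delta_term (c : R) (n : nat) : R :=
  contig_alpha * (hyp21_term a b c n * poch_ratio (q + 1) n)
  - (q + 1 - c) * (hyp21_term a b c n * poch_ratio q n).

Definition Delta (c : R) : R :=
  epsilon (inhabits 0) (fun l => Un_cv (sum_f_R0 (Delta_term c)) l).

Lemma Delta_sum_cv_combination (c l1 l0 : R) :
  Un_cv (sum_f_R0 (fun n => hyp21_term a b c n * poch_ratio (q + 1) n)) l1 ->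
  Un_cv (sum_f_R0 (fun n => hyp21_term a b c n * poch_ratio q n)) l0 ->
  Un_cv (sum_f_R0 (Delta_term c)) (contig_alpha * l1 - (q + 1 - c) * l0).
Proof.
  intros H1 H0.
  apply (Un_cv_eventually_ext
    (fun N => contig_alpha * sum_f_R0 (fun n => hyp21_term a b c n * poch_ratio (q + 1) n) N
            - (q + 1 - c) * sum_f_R0 (fun n => hyp21_term a b c n * poch_ratio q n) N) _ 0).
  - intros N _. induction N as [|N IH]; simpl; [unfold Delta_term; ring |].
    rewrite <- IH. unfold Delta_term. ring.
  - apply CV_minus; apply CV_mult; try apply Un_cv_const; assumption.
Qed.

Lemma Delta_eq (c l1 l0 : R) :
  Un_cv (sum_f_R0 (fun n => hyp21_term a b c n * poch_ratio (q + 1) n)) l1 ->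
  Un_cv (sum_f_R0 (fun n => hyp21_term a b c n * poch_ratio q n)) l0 ->
  Delta c = contig_alpha * l1 - (q + 1 - c) * l0.
Proof.
  intros H1 H0. pose proof (Delta_sum_cv_combination c l1 l0 H1 H0) as H.
  unfold Delta. eapply UL_sequence; [| exact H].
  exact (epsilon_spec (inhabits 0) (fun l => Un_cv (sum_f_R0 (Delta_term c)) l) (ex_intro _ _ H)).
Qed.

Lemma Delta_sum_cv (c : R) : c + 1 > a + b -> not_nonpos_int c ->
  Un_cv (sum_f_R0 (Delta_term c)) (Delta c).
Proof.
  intros habc hc.
  destruct (hyp21_series_cv a b c (q + 1) habc hc ltac:(lra)) as [l1 H1].
  destruct (hyp21_series_cv a b c q habc hc hq) as [l0 H0].
  rewrite (Delta_eq c l1 l0 H1 H0). apply Delta_sum_cv_combination; assumption.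
Qed.

(* The remainder is a single 2F1 term, which tends to [0]. *)
Lemma Delta_sum_contiguous (c : R) (N : nat) : not_nonpos_int c ->
  c * (c + 1 - a - b) * sum_f_R0 (Delta_term c) N
  - (c - a) * (c - b) * sum_f_R0 (Delta_term (c + 1)) N
  = c * ((c + 1 - a - b) * (c - q - 1) - (c - a) * (c - b))
    * INR (S N) * hyp21_term a b c (S N) / (q + INR (S N)).
Proof.
  intros hc.
  assert (Hc0 : c <> 0) by (intro X; apply (hc O); simpl; lra).
  induction N as [|N IH].
  - simpl sum_f_R0. unfold Delta_term.
    rewrite !hyp21_term_0, !poch_ratio_0, (hyp21_term_S a b c 0), hyp21_term_0 by exact hc.
    unfold contig_alpha. simpl INR. field. repeat split; lra.
  - simpl sum_f_R0.
    replace (c * (c + 1 - a - b) * (sum_f_R0 (Delta_term c) N + Delta_term c (S N)) -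
      (c - a) * (c - b) * (sum_f_R0 (Delta_term (c + 1)) N + Delta_term (c + 1) (S N)))
    with ((c * (c + 1 - a - b) * sum_f_R0 (Delta_term c) N -
      (c - a) * (c - b) * sum_f_R0 (Delta_term (c + 1)) N) +
      (c * (c + 1 - a - b) * Delta_term c (S N) - (c - a) * (c - b) * Delta_term (c + 1) (S N)))
      by ring.
    rewrite IH. set (m := INR (S N)).
    assert (Hm : m >= 1) by (unfold m; rewrite S_INR; pose proof (pos_INR N); lra).
    assert (HcS : c + m <> 0) by (unfold m; intro X; apply (hc (S N)); lra).
    unfold Delta_term.
    rewrite (hyp21_term_plus_1 a b c (S N)), (hyp21_term_S a b c (S N)), !poch_ratio_S by (exact hc || lra).
    fold m. rewrite (S_INR (S N)). fold m.
    unfold contig_alpha. field. repeat split; lra.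
Qed.

Lemma Delta_contiguous (c : R) : c + 1 > a + b -> not_nonpos_int c ->
  c * (c + 1 - a - b) * Delta c = (c - a) * (c - b) * Delta (c + 1).
Proof.
  intros habc hc. apply Rminus_diag_uniq.
  set (K := c * ((c + 1 - a - b) * (c - q - 1) - (c - a) * (c - b))).
  apply (UL_sequence (fun N => c * (c + 1 - a - b) * sum_f_R0 (Delta_term c) N
                              - (c - a) * (c - b) * sum_f_R0 (Delta_term (c + 1)) N)).
  - apply CV_minus; apply CV_mult; try apply Un_cv_const.
    + exact (Delta_sum_cv c habc hc).
    + exact (Delta_sum_cv (c + 1) ltac:(lra) (not_nonpos_int_plus_1 c hc)).
  - apply (Un_cv_eventually_ext
      (fun N => K * INR (S N) * hyp21_term a b c (S N) / (q + INR (S N))) _ 0).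
    { intros N _. symmetry. apply Delta_sum_contiguous, hc. }
    refine (Un_cv_0_dominated _ _ (Rabs K * (1 + / (q + 1))) 0 _
             (Un_cv_0_Rabs_S _ (hyp21_term_cv_0 a b c habc hc))).
    intros n _. cbv beta. set (m := INR (S n)).
    assert (Hm : m >= 1) by (unfold m; rewrite S_INR; pose proof (pos_INR n); lra).
    assert (Hmq : m / (q + m) <= 1 + / (q + 1)).
    { assert (/ (q + 1) * (q + m) >= 1).
      { apply Rle_ge, (Rmult_le_reg_l (q + 1)); [lra |].
        rewrite <- Rmult_assoc, Rinv_r by lra. lra. }
      apply (Rmult_le_reg_r (q + m)); [lra |]. unfold Rdiv.
      rewrite Rmult_assoc, Rinv_l by lra. destruct (Rle_dec 0 q); nra. }
    replace (K * m * hyp21_term a b c (S n) / (q + m))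
      with (K * hyp21_term a b c (S n) * (m / (q + m))) by (field; lra).
    rewrite !Rabs_mult, (Rabs_pos_eq (m / (q + m))) by (apply Rle_mult_inv_pos; lra).
    replace (Rabs K * (1 + / (q + 1)) * Rabs (hyp21_term a b c (S n)))
      with (Rabs K * Rabs (hyp21_term a b c (S n)) * (1 + / (q + 1))) by ring.
    apply Rmult_le_compat_l; [apply Rmult_le_pos; apply Rabs_pos | exact Hmq].
Qed.

Lemma Delta_contiguous_iter (c : R) (m : nat) : c + 1 > a + b -> not_nonpos_int c ->
  poch c m * poch (c + 1 - a - b) m * Delta c = poch (c - a) m * poch (c - b) m * Delta (c + INR m).
Proof.
  intros habc hc. induction m as [|m IH].
  - simpl. rewrite Rplus_0_r. ring.
  - rewrite !poch_S, S_INR, <- Rplus_assoc. pose proof (pos_INR m).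
    pose proof (Delta_contiguous (c + INR m) ltac:(lra) (not_nonpos_int_plus_INR c m hc)) as Hrel.
    replace (poch c m * (c + INR m) * (poch (c + 1 - a - b) m * (c + 1 - a - b + INR m)) * Delta c)
      with ((c + INR m) * (c + 1 - a - b + INR m) * (poch c m * poch (c + 1 - a - b) m * Delta c))
      by ring.
    rewrite IH.
    replace (c + 1 - a - b + INR m) with (c + INR m + 1 - a - b) by ring.
    replace (c - a + INR m) with (c + INR m - a) by ring.
    replace (c - b + INR m) with (c + INR m - b) by ring.
    transitivity (poch (c - a) m * poch (c - b) m *
      ((c + INR m) * (c + INR m + 1 - a - b) * Delta (c + INR m))); [ring |].
    rewrite Hrel. ring.
Qed.

Lemma Rabs_Delta_term_S_le (c : R) (k : nat) : c > 0 ->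
  Rabs (Delta_term c (S k)) <=
  (Rabs contig_alpha + (Rabs (q + 1) + c) * (Rabs q / (q + 1)))
  * hyp21_term (Rabs a) (Rabs b) c (S k).
Proof.
  intros Hc. unfold Delta_term. rewrite !poch_ratio_S by lra.
  pose proof (Rabs_hyp21_term_le a b c (S k) Hc) as Ht.
  set (T := hyp21_term a b c (S k)) in *. set (TA := hyp21_term (Rabs a) (Rabs b) c (S k)) in *.
  set (m := INR (S k)). set (W := Rabs q / (q + 1)).
  assert (Hm : m >= 1) by (unfold m; rewrite S_INR; pose proof (pos_INR k); lra).
  assert (Hw1 : Rabs ((q + 1) / (q + 1 + m)) <= 1).
  { rewrite Rabs_pos_eq by (apply Rle_mult_inv_pos; lra).
    apply (Rmult_le_reg_r (q + 1 + m)); [lra |]. unfold Rdiv.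
    rewrite Rmult_assoc, Rinv_l by lra. lra. }
  assert (Hw0 : Rabs (q / (q + m)) <= W).
  { unfold Rdiv, W. rewrite Rabs_mult, Rabs_inv, (Rabs_pos_eq (q + m)) by lra.
    apply Rmult_le_compat_l; [apply Rabs_pos | apply Rinv_le_contravar; lra]. }
  assert (Hqc : Rabs (q + 1 - c) <= Rabs (q + 1) + c).
  { unfold Rminus. eapply Rle_trans; [apply Rabs_triang |].
    rewrite Rabs_Ropp, (Rabs_pos_eq c) by lra. lra. }
  unfold Rminus at 1. eapply Rle_trans; [apply Rabs_triang |].
  rewrite !Rabs_Ropp, !Rabs_mult.
  pose proof (Rabs_pos T). pose proof (Rabs_pos contig_alpha). pose proof (Rabs_pos (q + 1 - c)).
  pose proof (Rabs_pos ((q + 1) / (q + 1 + m))). pose proof (Rabs_pos (q / (q + m))).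
  assert (Rabs contig_alpha * (Rabs T * Rabs ((q + 1) / (q + 1 + m))) <= Rabs contig_alpha * TA).
  { apply Rmult_le_compat_l; [assumption | nra]. }
  assert (Rabs (q + 1 - c) * (Rabs T * Rabs (q / (q + m))) <= (Rabs (q + 1) + c) * (TA * W)).
  { apply Rmult_le_compat; [assumption | nra | assumption | apply Rmult_le_compat; assumption]. }
  lra.
Qed.

Lemma Rabs_Delta_sum_sub_le (c : R) (N : nat) : c > 0 ->
  Rabs (sum_f_R0 (Delta_term c) N - (c + contig_alpha - (q + 1))) <=
  (Rabs contig_alpha + (Rabs (q + 1) + c) * (Rabs q / (q + 1)))
  * (sum_f_R0 (hyp21_term (Rabs a) (Rabs b) c) N - 1).
Proof.
  intros Hc. set (M := Rabs contig_alpha + (Rabs (q + 1) + c) * (Rabs q / (q + 1))).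
  replace (c + contig_alpha - (q + 1)) with (Delta_term c 0)
    by (unfold Delta_term; rewrite hyp21_term_0, !poch_ratio_0; ring).
  induction N as [|N IH]; simpl sum_f_R0.
  - rewrite hyp21_term_0, Rminus_diag, Rabs_R0. lra.
  - pose proof (Rabs_Delta_term_S_le c N Hc) as Hk. fold M in Hk.
    replace (sum_f_R0 (Delta_term c) N + Delta_term c (S N) - Delta_term c 0)
      with ((sum_f_R0 (Delta_term c) N - Delta_term c 0) + Delta_term c (S N)) by ring.
    eapply Rle_trans; [apply Rabs_triang | lra].
Qed.

Lemma Delta_asymptotic : exists C K, forall c, c >= C ->
  Rabs (Delta c - (c + contig_alpha - (q + 1))) <= K.
Proof.
  set (A := Rabs a). set (B := Rabs b). set (W := Rabs q / (q + 1)).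
  assert (HA : 0 <= A) by apply Rabs_pos. assert (HB : 0 <= B) by apply Rabs_pos.
  assert (HW : 0 <= W) by (apply Rle_mult_inv_pos; [apply Rabs_pos | lra]).
  pose proof (Rabs_pos (q + 1)). pose proof (Rabs_pos contig_alpha).
  exists (1 + 3 * A + 3 * B + 3 * A * B + A + B + Rabs (q + 1)).
  exists (2 * A * B * (Rabs contig_alpha + Rabs (q + 1) * W) + 2 * A * B * W).
  intros c Hc.
  assert (HAB : 0 <= A * B) by (apply Rmult_le_pos; assumption).
  assert (Hc1 : c >= 1 + 3 * A + 3 * B + 3 * A * B) by lra.
  assert (habc : c + 1 > a + b)
    by (pose proof (Rle_abs a); pose proof (Rle_abs b); unfold A, B in *; lra).
  set (M := Rabs contig_alpha + (Rabs (q + 1) + c) * W).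
  assert (HM : 0 <= M) by (unfold M; nra).
  apply (Un_cv_limit_dist_le (sum_f_R0 (Delta_term c)));
    [apply Delta_sum_cv; [exact habc | apply not_nonpos_int_pos; lra] |].
  intros N. eapply Rle_trans; [apply Rabs_Delta_sum_sub_le; lra |]. fold A B W M.
  pose proof (hyp21_partial_sum_le A B c N HA HB Hc1).
  assert (M * (sum_f_R0 (hyp21_term A B c) N - 1) <= M * (2 * (A * B / c)))
    by (apply Rmult_le_compat_l; lra).
  assert (HMc : M * (2 * (A * B / c))
    = 2 * A * B * (Rabs contig_alpha + Rabs (q + 1) * W) / c + 2 * A * B * W)
    by (unfold M; field; lra).
  assert (2 * A * B * (Rabs contig_alpha + Rabs (q + 1) * W) / c
          <= 2 * A * B * (Rabs contig_alpha + Rabs (q + 1) * W)).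
  { assert (0 <= 2 * A * B * (Rabs contig_alpha + Rabs (q + 1) * W)).
    { apply Rmult_le_pos; [nra |]. apply Rplus_le_le_0_compat; [assumption | nra]. }
    apply (Rmult_le_reg_r c); [lra |]. unfold Rdiv.
    rewrite Rmult_assoc, Rinv_l by lra. nra. }
  lra.
Qed.

Lemma Delta_shift_ratio_cv (c : R) :
  Un_cv (fun n => Delta (c + INR (S (S n))) / INR (S n)) 1.
Proof.
  destruct Delta_asymptotic as [C [K HK]].
  destruct (INR_archimed 1 (Rabs (C - c)) ltac:(lra)) as [N HN]. rewrite Rmult_1_r in HN.
  apply Un_cv_of_sub_0.
  refine (Un_cv_0_dominated _ _ (K + Rabs (c + contig_alpha - q)) N _ Un_cv_inv_INR_S).
  intros n Hn. cbv beta.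
  assert (HC : c + INR (S (S n)) >= C).
  { apply le_INR in Hn. rewrite !S_INR. pose proof (Rle_abs (C - c)). pose proof (pos_INR n). lra. }
  specialize (HK _ HC).
  set (m := INR (S n)). assert (Hm : m >= 1) by (unfold m; rewrite S_INR; pose proof (pos_INR n); lra).
  rewrite (S_INR (S n)) in HK. fold m in HK.
  set (h := Delta (c + (m + 1))) in *.
  replace (Delta (c + INR (S (S n))) / m - 1)
    with ((h - (c + (m + 1) + contig_alpha - (q + 1)) + (c + contig_alpha - q)) * / m)
    by (unfold h; rewrite (S_INR (S n)); fold m; field; lra).
  rewrite Rabs_mult, (Rabs_pos_eq (/ m)) by (left; apply Rinv_0_lt_compat; lra).
  apply Rmult_le_compat_r; [left; apply Rinv_0_lt_compat; lra |].
  eapply Rle_trans; [apply Rabs_triang | lra].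
Qed.

(* Iterating the contiguous relation [n + 2] times turns the Euler products for
   [1/Gamma] into [Delta c] times the normalised [Delta (c + n + 2) / (n + 1)]. *)
Lemma rgamma_seq_Delta (c : R) (n : nat) : c + 1 > a + b -> not_nonpos_int c ->
  rgamma_seq (c - a) n * rgamma_seq (c - b) n * (Delta (c + INR (S (S n))) / INR (S n))
  = Delta c * (rgamma_seq c n * rgamma_seq (c + 1 - a - b) n).
Proof.
  intros habc hc. unfold rgamma_seq. rewrite !prod_f_R0_poch.
  pose proof (Delta_contiguous_iter c (S (S n)) habc hc) as Hiter.
  set (m := INR (S n)). assert (Hm : m > 0) by (apply lt_0_INR; lia).
  set (F := INR (fact (S n))). assert (HF : F > 0) by apply INR_fact_lt_0.
  assert (HR : Rpower m c * Rpower m (c + 1 - a - b) = m * (Rpower m (c - a) * Rpower m (c - b))).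
  { rewrite <- !Rpower_plus. replace (c + (c + 1 - a - b)) with ((c - a + (c - b)) + 1) by ring.
    rewrite Rpower_plus, Rpower_1 by exact Hm. ring. }
  assert (0 < Rpower m c) by apply exp_pos. assert (0 < Rpower m (c + 1 - a - b)) by apply exp_pos.
  assert (0 < Rpower m (c - a)) by apply exp_pos. assert (0 < Rpower m (c - b)) by apply exp_pos.
  set (D := Delta (c + INR (S (S n)))) in *.
  transitivity (poch (c - a) (S (S n)) * poch (c - b) (S (S n)) * D
                / (F * F * Rpower m (c - a) * Rpower m (c - b) * m)); [field; repeat split; lra |].
  rewrite <- Hiter.
  transitivity (poch c (S (S n)) * poch (c + 1 - a - b) (S (S n)) * Delta c
                / (F * F * (Rpower m c * Rpower m (c + 1 - a - b)))); [rewrite HR; field; repeat split; lra |].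
  field. repeat split; lra.
Qed.

Lemma Delta_rgamma (c : R) : c + 1 > a + b -> not_nonpos_int c ->
  Delta c = rgamma (c - a) * rgamma (c - b) / (rgamma c * rgamma (c + 1 - a - b)).
Proof.
  intros habc hc.
  destruct (rgamma_seq_cv (c - a)) as [la [Hla _]].
  destruct (rgamma_seq_cv (c - b)) as [lb [Hlb _]].
  destruct (rgamma_seq_cv c) as [lc [Hlc Hlc0]].
  destruct (rgamma_seq_cv (c + 1 - a - b)) as [ld [Hld Hld0]].
  specialize (Hlc0 hc). specialize (Hld0 (not_nonpos_int_pos (c + 1 - a - b) ltac:(lra))).
  rewrite (rgamma_of_Un_cv _ _ Hla), (rgamma_of_Un_cv _ _ Hlb),
          (rgamma_of_Un_cv _ _ Hlc), (rgamma_of_Un_cv _ _ Hld).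
  assert (Hlim : la * lb * 1 = Delta c * (lc * ld)).
  { apply (UL_sequence (fun n => rgamma_seq (c - a) n * rgamma_seq (c - b) n
                                 * (Delta (c + INR (S (S n))) / INR (S n)))).
    - apply CV_mult; [apply CV_mult; assumption | apply Delta_shift_ratio_cv].
    - apply (Un_cv_eventually_ext
        (fun n => Delta c * (rgamma_seq c n * rgamma_seq (c + 1 - a - b) n)) _ 0).
      + intros n _. symmetry. apply rgamma_seq_Delta; assumption.
      + apply CV_mult; [apply Un_cv_const | apply CV_mult; assumption]. }
  rewrite Rmult_1_r in Hlim. rewrite Hlim. field. split; assumption.
Qed.

End Contiguity.

Theorem lemma7p4 (a b c q : R)
  (habc : c + 1 > a + b)
  (hc : forall n : nat, c <> - INR n)
  (hq : q > -1) :
  (q + 1 - a) * (q + 1 - b) / (q + 1) * hyp32_at1 a b (q + 1) c (q + 1 + 1)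
  - (q + 1 - c) * hyp32_at1 a b q c (q + 1)
  = rgamma (c - a) * rgamma (c - b) / (rgamma c * rgamma (c + 1 - a - b)).
Proof.
  destruct (hyp21_series_cv a b c (q + 1) habc hc ltac:(lra)) as [l1 H1].
  destruct (hyp21_series_cv a b c q habc hc hq) as [l0 H0].
  rewrite (hyp32_at1_of_Un_cv a b c (q + 1) l1), (hyp32_at1_of_Un_cv a b c q l0)
    by (assumption || lra).
  rewrite <- (Delta_rgamma a b q hq c habc hc), (Delta_eq a b q c l1 l0 H1 H0).
  reflexivity.
Qed.
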